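(* For all real numbers $a,b,c>0$, \[ \frac{(a+b+c)^3}{(ab+bc+ca)^2}\leq \frac{4a}{(b+c)^2}+\frac{4b}{(c+a)^2}+\frac{4c}{(a+b)^2}. \] *)

From Stdlib Require Import Reals.

From Stdlib Require Import Reals Lra.
Open Scope R_scope.

(* Multiplying out the denominators, the inequality says that the symmetric
   polynomial [ineq_numerator] of degree 9 is nonnegative on the nonnegative
   octant.  By symmetry we may assume [c <= b <= a]; the substitution
   [c = t], [b = t + x], [a = t + x + y] with [t, x, y >= 0] then turns it
   into a polynomial all of whose coefficients are nonnegative. *)

Definition ineq_numerator (a b c : R) : R :=
  4 * (a * b + b * c + c * a) ^ 2
    * (a * ((c + a) * (a + b)) ^ 2 + b * ((a + b) * (b + c)) ^ 2
       + c * ((b + c) * (c + a)) ^ 2)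
  - (a + b + c) ^ 3 * ((a + b) * (b + c) * (c + a)) ^ 2.

Lemma ineq_numerator_swap12 (a b c : R) :
  ineq_numerator a b c = ineq_numerator b a c.
Proof. unfold ineq_numerator; ring. Qed.

Lemma ineq_numerator_swap23 (a b c : R) :
  ineq_numerator a b c = ineq_numerator a c b.
Proof. unfold ineq_numerator; ring. Qed.

Lemma ineq_numerator_shifted (t x y : R) :
  ineq_numerator (t + x + y) (t + x) t =
    (3 * x^2 * y^7 + 24 * x^3 * y^6 + 75 * x^4 * y^5 + 114 * x^5 * y^4
     + 84 * x^6 * y^3 + 24 * x^7 * y^2)
  + t * (12 * x * y^7 + 131 * x^2 * y^6 + 526 * x^3 * y^5 + 1003 * x^4 * y^4
     + 944 * x^5 * y^3 + 408 * x^6 * y^2 + 80 * x^7 * y + 20 * x^8)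
  + t^2 * (12 * y^7 + 228 * x * y^6 + 1305 * x^2 * y^5 + 3280 * x^3 * y^4
     + 3965 * x^4 * y^3 + 2286 * x^5 * y^2 + 700 * x^6 * y + 200 * x^7)
  + t^3 * (124 * y^6 + 1348 * x * y^5 + 4985 * x^2 * y^4 + 8086 * x^3 * y^3
     + 6073 * x^4 * y^2 + 2436 * x^5 * y + 812 * x^6)
  + t^4 * (488 * y^5 + 3520 * x * y^4 + 8488 * x^2 * y^3 + 8512 * x^3 * y^2
     + 4280 * x^4 * y + 1712 * x^5)
  + t^5 * (920 * y^4 + 4336 * x * y^3 + 6312 * x^2 * y^2 + 3952 * x^3 * y
     + 1976 * x^4)
  + t^6 * (832 * y^3 + 2256 * x * y^2 + 1776 * x^2 * y + 1184 * x^3)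
  + t^7 * (288 * y^2 + 288 * x * y + 288 * x^2).
Proof. unfold ineq_numerator; ring. Qed.

Lemma ineq_numerator_nonneg_sorted (a b c : R) :
  0 <= c -> c <= b -> b <= a -> 0 <= ineq_numerator a b c.
Proof.
  intros Hc Hcb Hba.
  replace (ineq_numerator a b c)
    with (ineq_numerator (c + (b - c) + (a - b)) (c + (b - c)) c)
    by (f_equal; ring).
  rewrite ineq_numerator_shifted.
  assert (Hx : 0 <= b - c) by lra.
  assert (Hy : 0 <= a - b) by lra.
  generalize dependent (b - c); generalize dependent (a - b); intros y Hy x Hx.
  repeat (apply Rplus_le_le_0_compat || apply Rmult_le_pos || apply pow_le
          || lra).
Qed.

Lemma ineq_numerator_nonneg_min_last (a b c : R) :
  0 <= c -> c <= b -> c <= a -> 0 <= ineq_numerator a b c.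
Proof.
  intros Hc Hcb Hca.
  destruct (Rle_dec b a).
  - now apply ineq_numerator_nonneg_sorted.
  - rewrite ineq_numerator_swap12; apply ineq_numerator_nonneg_sorted; lra.
Qed.

Lemma ineq_numerator_nonneg (a b c : R) :
  0 <= a -> 0 <= b -> 0 <= c -> 0 <= ineq_numerator a b c.
Proof.
  intros Ha Hb Hc.
  destruct (Rle_dec c a), (Rle_dec c b).
  - now apply ineq_numerator_nonneg_min_last.
  - rewrite ineq_numerator_swap23; apply ineq_numerator_nonneg_min_last; lra.
  - rewrite ineq_numerator_swap12, ineq_numerator_swap23.
    apply ineq_numerator_nonneg_min_last; lra.
  - destruct (Rle_dec b a).
    + rewrite ineq_numerator_swap23; apply ineq_numerator_nonneg_min_last; lra.
    + rewrite ineq_numerator_swap12, ineq_numerator_swap23.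
      apply ineq_numerator_nonneg_min_last; lra.
Qed.

Theorem mainTheorem1 (a b c : R) (ha : 0 < a) (hb : 0 < b) (hc : 0 < c) :
  (a + b + c) ^ 3 / (a * b + b * c + c * a) ^ 2 <=
  4 * a / (b + c) ^ 2 + 4 * b / (c + a) ^ 2 + 4 * c / (a + b) ^ 2.
Proof.
  set (q := a * b + b * c + c * a).
  set (d := (a + b) * (b + c) * (c + a)).
  assert (Hq : 0 < q) by (unfold q; nra).
  assert (Hd : 0 < d) by (unfold d; repeat apply Rmult_lt_0_compat; lra).
  assert (Hdiff :
    4 * a / (b + c) ^ 2 + 4 * b / (c + a) ^ 2 + 4 * c / (a + b) ^ 2
    - (a + b + c) ^ 3 / q ^ 2 = ineq_numerator a b c / (q ^ 2 * d ^ 2)).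
  { unfold ineq_numerator, q, d in *; field; repeat split; lra. }
  assert (0 <= ineq_numerator a b c / (q ^ 2 * d ^ 2)).
  { apply Rmult_le_pos.
    - apply ineq_numerator_nonneg; lra.
    - apply Rlt_le, Rinv_0_lt_compat, Rmult_lt_0_compat; apply pow_lt; lra. }
  lra.
Qed.
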